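(* Let $\beta\in(\frac{1+\sqrt5}{2},2)$. If the quasi-greedy orbit of $1$ hits $\beta^{-1}(\beta-1)^{-1}$ for the first time (there is a minimal $k\ge1$ with $Q^k(1)=\beta^{-1}(\beta-1)^{-1}$ and $Q^i(1)\notin[\beta^{-1},\beta^{-1}(\beta-1)^{-1}]$ for $1\le i<k$), then $\widetilde U_\beta$ is a subshift of finite type.
   Context: $\widetilde U_\beta\subseteq\{0,1\}^{\mathbb{N}}$ is the set of sequences $(a_n)$ that are the unique $\beta$-expansion (sequence with $x=\sum a_n\beta^{-n}$) of the number they represent. The quasi-greedy expansion $(\eta_i)$ of $1$ equals the greedy $\beta$-expansion of $1$ (generated by $G(x)=\beta x\bmod1$ on $[0,1)$, $G(x)=\beta x-1$ on $[1,(\beta-1)^{-1}]$) if that is infinite; if the greedy expansion is $a_1\cdots a_n0^\infty$ with $a_n=1$, then $(\eta_i)=(a_1\cdots a_{n-1}(a_n-1))^\infty$. The quasi-greedy orbit of $1$ is $Q^i(1)=\sum_{j\ge1}\eta_{i+j}\beta^{-j}$, $i\ge1$. A subshift of finite type is a set of all sequences avoiding some finite set of forbidden words. *)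

From Stdlib Require Import Reals Lra Lia List Arith.
Open Scope R_scope.

(* Sequences in {0,1}^N are represented as nat -> bool, 0-indexed:
   a 0 is the first digit a_1 of the paper. *)
Definition digR (b : bool) : R := if b then 1 else 0.

Definition bval (beta : R) (a : nat -> bool) (x : R) : Prop :=
  infinite_sum (fun n => digR (a n) / beta ^ (S n)) x.

Definition Ubeta (beta : R) (a : nat -> bool) : Prop :=
  exists x, bval beta a x /\
    forall b : nat -> bool, bval beta b x -> forall n, b n = a n.

Definition occurs_at (w : list bool) (a : nat -> bool) (k : nat) : Prop :=
  forall i, (i < length w)%nat -> a (k + i)%nat = nth i w false.

Definition is_SFT (S : (nat -> bool) -> Prop) : Prop :=
  exists F : list (list bool),
    forall a, S a <-> (forall w, In w F -> forall k, ~ occurs_at w a k).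

Definition Gmap (beta x : R) : R :=
  if Rlt_dec x 1 then frac_part (beta * x) else beta * x - 1.

(* digit produced by G at y: floor(beta y) on [0,1) (which is 0 or 1), and 1 on [1, ...] *)
Definition greedy_digit (beta y : R) : bool :=
  if Rlt_dec y 1 then (if Rle_dec 1 (beta * y) then true else false) else true.

Definition greedy1 (beta : R) (n : nat) : bool :=
  greedy_digit beta (Nat.iter n (Gmap beta) 1).

Definition quasi_greedy1 (beta : R) (eta : nat -> bool) : Prop :=
  ((forall N, exists n, (N <= n)%nat /\ greedy1 beta n = true) /\
     forall k, eta k = greedy1 beta k)
  \/
  (exists m : nat, greedy1 beta m = true /\
     (forall j, (m < j)%nat -> greedy1 beta j = false) /\
     forall k, eta k = (if Nat.eqb (k mod (S m)) m then false
                        else greedy1 beta (k mod (S m)))).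

(* Q^i(1) = sum_{j>=1} eta_{i+j} beta^{-j} *)
Definition Qorb (beta : R) (eta : nat -> bool) (i : nat) (q : R) : Prop :=
  bval beta (fun j => eta (i + j)%nat) q.

From Stdlib Require Import Reals Lra Lia List Arith.
From Coquelicot Require Import Coquelicot.
Open Scope R_scope.

(* A sequence c is the unique expansion of its value iff no digit can be swapped against its
   tail: after every 0 the tail has value < 1, and after every 1 the tail has value
   > 1/(beta-1) - 1; the second condition is the first one for the reflected sequence 1 - c.
   Let k be the first time the quasi-greedy orbit of 1 hits 1/(beta(beta-1)).  For a tail w of
   value < 1, the block w_0 ... w_k is lexicographically below eta_0 ... eta_k: a first
   difference w_j = 1 > eta_j = 0 with 0 < j < k would put Q^j(1) in the excluded window
   [1/beta, 1/(beta(beta-1))], and agreement up to k forces the digit 1 at k followed by a tail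
   violating the condition there.  Conversely, a tail of value >= 1 whose first k+1 digits are
   already below eta must read ... 0 1 1 1 ..., which the same test rejects at that 0.  So
   uniqueness is the avoidance of 0u and of the reflection of 0u for the finitely many words u
   of length k+1 that are not below eta_0 ... eta_k. *)

Definition shift (c : nat -> bool) (n : nat) : nat -> bool := fun i => c (n + i)%nat.

Definition negs (c : nat -> bool) : nat -> bool := fun i => negb (c i).

Lemma digR_bounds (x : bool) : 0 <= digR x <= 1.
Proof. destruct x; simpl; lra. Qed.

Section Value.

Variable b : R.
Hypothesis b_gt1 : 1 < b.

Definition value (c : nat -> bool) : R := Series (fun n => digR (c n) / b ^ S n).

Lemma ex_series_digits (c : nat -> bool) : ex_series (fun n => digR (c n) / b ^ S n).
Proof.
  apply (@ex_series_le R_AbsRing R_CompleteNormedModule _ (fun n => (/ b) ^ n)).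
  - intro n. change (norm _) with (Rabs (digR (c n) / b ^ S n)).
    assert (0 < b ^ n) by (apply pow_lt; lra).
    pose proof (digR_bounds (c n)).
    rewrite pow_inv, Rabs_pos_eq; simpl.
    + apply Rmult_le_reg_r with (b * b ^ n); [nra|].
      unfold Rdiv. rewrite Rmult_assoc, Rinv_l by nra.
      replace (/ b ^ n * (b * b ^ n)) with b by (field; lra). nra.
    + apply Rdiv_le_0_compat; nra.
  - apply ex_series_geom. rewrite Rabs_pos_eq by (left; apply Rinv_0_lt_compat; lra).
    rewrite <- Rinv_1. apply Rinv_lt_contravar; lra.
Qed.

Lemma bval_value (c : nat -> bool) : bval b c (value c).
Proof. apply is_series_Reals, Series_correct, ex_series_digits. Qed.

Lemma bval_unique (c : nat -> bool) (x : R) : bval b c x -> x = value c.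
Proof. intro H. symmetry. apply is_series_unique, is_series_Reals, H. Qed.

Lemma value_ext (c d : nat -> bool) : (forall n, c n = d n) -> value c = value d.
Proof. intro H. apply Series_ext. intro n. now rewrite H. Qed.

Lemma value_cons (c : nat -> bool) : b * value c = digR (c 0%nat) + value (shift c 1).
Proof.
  unfold value. rewrite Series_incr_1 by apply ex_series_digits.
  rewrite (Series_ext _ (fun n => / b * (digR (shift c 1 n) / b ^ S n))).
  - rewrite Series_scal_l. simpl. field. lra.
  - intro n. unfold shift. simpl. field. split; [apply pow_nonzero|]; lra.
Qed.

Lemma value_shift (c : nat -> bool) (n : nat) :
  b * value (shift c n) = digR (c n) + value (shift c (S n)).
Proof.
  rewrite value_cons, (value_ext (shift (shift c n) 1) (shift c (S n))).
  - change (shift c n 0) with (c (n + 0)%nat). now rewrite Nat.add_0_r.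
  - intro i. unfold shift. f_equal. lia.
Qed.

Lemma value_ones : value (fun _ => true) = / (b - 1).
Proof.
  pose proof (value_cons (fun _ => true)) as H.
  change (shift (fun _ => true) 1) with (fun _ : nat => true) in H. simpl in H.
  apply (Rmult_eq_reg_r (b - 1)); [|lra]. rewrite Rinv_l by lra. lra.
Qed.

Lemma value_zeros : value (fun _ => false) = 0.
Proof.
  pose proof (value_cons (fun _ => false)) as H.
  change (shift (fun _ => false) 1) with (fun _ : nat => false) in H. simpl in H.
  assert (Hz : (b - 1) * value (fun _ => false) = 0) by lra.
  apply Rmult_integral in Hz. lra.
Qed.

Lemma value_bounds (c : nat -> bool) : 0 <= value c <= / (b - 1).
Proof.
  rewrite <- value_zeros, <- value_ones.
  split; apply Series_le; try apply ex_series_digits; intro n;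
    assert (0 < / b ^ S n) by (apply Rinv_0_lt_compat, pow_lt; lra);
    unfold Rdiv; destruct (c n); cbn [digR]; lra.
Qed.

Lemma mult_b_max : b * / (b - 1) = 1 + / (b - 1).
Proof. field. lra. Qed.

Lemma value_negs (c : nat -> bool) : value (negs c) = / (b - 1) - value c.
Proof.
  rewrite <- value_ones. unfold value.
  rewrite <- Series_minus by apply ex_series_digits.
  apply Series_ext. intro n. unfold negs. destruct (c n); cbn [negb digR]; field;
    apply pow_nonzero; lra.
Qed.

Lemma value_max_ones (c : nat -> bool) : / (b - 1) <= value c -> forall i, c i = true.
Proof.
  intro Hc.
  assert (Htail : forall n, value (shift c n) = / (b - 1)).
  { induction n as [|n IH].
    - pose proof (value_bounds c). change (value (shift c 0)) with (value c). lra.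
    - pose proof (value_shift c n) as H. rewrite IH, mult_b_max in H.
      pose proof (value_bounds (shift c (S n))). pose proof (digR_bounds (c n)). lra. }
  intro i. pose proof (value_shift c i) as H. rewrite !Htail, mult_b_max in H.
  destruct (c i); [reflexivity|]. cbn in H. lra.
Qed.

Lemma value_tail_diff (c d : nat -> bool) (j : nat) :
  (forall i, (i < j)%nat -> c i = d i) ->
  value (shift c j) - value (shift d j) = b ^ j * (value c - value d).
Proof.
  induction j as [|j IH]; intro Hcd.
  - cbn. change (value (shift c 0)) with (value c).
    change (value (shift d 0)) with (value d). ring.
  - pose proof (value_shift c j). pose proof (value_shift d j).
    rewrite (Hcd j) in * by lia.
    rewrite <- tech_pow_Rmult, Rmult_assoc, <- IH by (intros; apply Hcd; lia). lra.
Qed.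

Lemma value_shift_shift (c : nat -> bool) (m n : nat) :
  value (shift (shift c m) n) = value (shift c (m + n)).
Proof. apply value_ext. intro i. unfold shift. f_equal. lia. Qed.

Lemma value_tail_ge_of_true (c : nat -> bool) (j : nat) : c j = true -> / b <= value (shift c j).
Proof.
  intro Hcj. pose proof (value_shift c j) as H. rewrite Hcj in H. cbn [digR] in H.
  pose proof (value_bounds (shift c (S j))).
  assert (b * / b = 1) by (field; lra). assert (0 < / b) by (apply Rinv_0_lt_compat; lra).
  nra.
Qed.

Lemma value_tail_le_of_false (c : nat -> bool) (j : nat) :
  c j = false -> value (shift c j) <= / b * / (b - 1).
Proof.
  intro Hcj. pose proof (value_shift c j) as H. rewrite Hcj in H. cbn [digR] in H.
  pose proof (value_bounds (shift c (S j))).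
  assert (b * / b = 1) by (field; lra). assert (0 < / b) by (apply Rinv_0_lt_compat; lra).
  nra.
Qed.

Lemma value_tail_lt (c d : nat -> bool) (j : nat) : (forall i, (i < j)%nat -> c i = d i) ->
  value c < value d -> value (shift c j) < value (shift d j).
Proof.
  intros Hcd Hlt. pose proof (value_tail_diff c d j Hcd).
  assert (0 < b ^ j) by (apply pow_lt; lra). nra.
Qed.

Lemma value_tail_le (c d : nat -> bool) (j : nat) : (forall i, (i < j)%nat -> c i = d i) ->
  value c <= value d -> value (shift c j) <= value (shift d j).
Proof.
  intros Hcd Hle. pose proof (value_tail_diff c d j Hcd).
  assert (0 < b ^ j) by (apply pow_lt; lra). nra.
Qed.

Lemma value_of_orbit (e : nat -> bool) (g : nat -> R) :
  (forall n, 0 <= g n <= / (b - 1)) ->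
  (forall n, g (S n) = b * g n - digR (e n)) -> value e = g 0%nat.
Proof.
  intros Hg Hrec.
  set (D n := value (shift e n) - g n).
  assert (HD : forall n, D n = b ^ n * D 0%nat).
  { induction n as [|n IH]; [cbn; ring|].
    unfold D in *. pose proof (value_shift e n).
    rewrite Hrec, <- tech_pow_Rmult, Rmult_assoc, <- IH. lra. }
  assert (Hbound : forall n, Rabs (D n) <= / (b - 1)).
  { intro n. unfold D. pose proof (value_bounds (shift e n)). specialize (Hg n).
    apply Rabs_le. lra. }
  destruct (Req_dec (D 0%nat) 0) as [Z|Z].
  { unfold D in Z. change (value (shift e 0)) with (value e) in Z. lra. }
  exfalso. assert (Hpos : 0 < Rabs (D 0%nat)) by (apply Rabs_pos_lt; auto).
  destruct (Pow_x_infinity b ltac:(rewrite Rabs_right; lra) (/ (b - 1) / Rabs (D 0%nat) + 1))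
    as [N HN].
  specialize (HN N (le_n N)). specialize (Hbound N). rewrite HD, Rabs_mult in Hbound.
  rewrite Rabs_right in HN, Hbound by (apply Rle_ge, pow_le; lra).
  assert (/ (b - 1) / Rabs (D 0%nat) * Rabs (D 0%nat) = / (b - 1)) by (field; lra).
  assert (b ^ N * Rabs (D 0%nat) >= (/ (b - 1) / Rabs (D 0%nat) + 1) * Rabs (D 0%nat))
    by (apply Rle_ge, Rmult_le_compat_r; lra).
  lra.
Qed.

End Value.

Lemma frac_part_between (z : Z) (x : R) : IZR z <= x < IZR z + 1 -> frac_part x = x - IZR z.
Proof. intro H. unfold frac_part. rewrite <- (Int_part_spec x z); lra. Qed.

Definition greedy_expansion (b y : R) (n : nat) : bool :=
  greedy_digit b (Nat.iter n (Gmap b) y).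

Section Greedy.

Variable b : R.
Hypothesis b_range : 1 < b < 2.

Lemma one_le_inv_pred : 1 <= / (b - 1).
Proof. rewrite <- Rinv_1 at 1. apply Rinv_le_contravar; lra. Qed.

Lemma greedy_digit_iff (y : R) : greedy_digit b y = true <-> / b <= y.
Proof.
  assert (Hinv : b * / b = 1) by (field; lra).
  assert (0 < / b < 1)
    by (split; [apply Rinv_0_lt_compat | rewrite <- Rinv_1; apply Rinv_lt_contravar]; lra).
  unfold greedy_digit.
  destruct (Rlt_dec y 1); [destruct (Rle_dec 1 (b * y))|]; split; intro; try easy; try nra.
Qed.

Lemma Gmap_eq (z : R) : 0 <= z -> Gmap b z = b * z - digR (greedy_digit b z).
Proof.
  intro Hz. unfold Gmap, greedy_digit.
  destruct (Rlt_dec z 1); [destruct (Rle_dec 1 (b * z))|]; cbn [digR]; try ring.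
  - apply (frac_part_between 1); nra.
  - rewrite (frac_part_between 0); cbn; nra.
Qed.

Lemma Gmap_range (z : R) : 0 <= z <= / (b - 1) -> 0 <= Gmap b z <= / (b - 1).
Proof.
  intro Hz. rewrite Gmap_eq by lra. pose proof (greedy_digit_iff z). pose proof one_le_inv_pred.
  pose proof (mult_b_max b ltac:(lra)).
  assert (b * / b = 1) by (field; lra).
  destruct (greedy_digit b z); cbn [digR].
  - assert (/ b <= z) by tauto. nra.
  - assert (z < / b) by (apply Rnot_le_lt; intuition discriminate). nra.
Qed.

Lemma iter_Gmap_range (y : R) (n : nat) :
  0 <= y <= / (b - 1) -> 0 <= Nat.iter n (Gmap b) y <= / (b - 1).
Proof. intro Hy. induction n as [|n IH]; [exact Hy|]. exact (Gmap_range _ IH). Qed.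

Lemma value_greedy_tail (y : R) (n : nat) : 0 <= y <= / (b - 1) ->
  value b (shift (greedy_expansion b y) n) = Nat.iter n (Gmap b) y.
Proof.
  intro Hy. transitivity (Nat.iter (n + 0) (Gmap b) y); [|now rewrite Nat.add_0_r].
  apply (value_of_orbit b ltac:(lra) _ (fun m => Nat.iter (n + m) (Gmap b) y)).
  - intro m. exact (iter_Gmap_range y _ Hy).
  - intro m. rewrite Nat.add_succ_r. apply Gmap_eq, iter_Gmap_range, Hy.
Qed.

End Greedy.

Section QuasiGreedy.

Variables (b : R) (eta : nat -> bool).
Hypothesis b_range : 1 < b < 2.
Hypothesis eta_quasi_greedy : quasi_greedy1 b eta.

Lemma value_greedy1_tail (n : nat) : value b (shift (greedy1 b) n) = Nat.iter n (Gmap b) 1.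
Proof. apply (value_greedy_tail b b_range). pose proof (one_le_inv_pred b b_range). lra. Qed.

Lemma value_greedy1 : value b (greedy1 b) = 1.
Proof. exact (value_greedy1_tail 0). Qed.

Lemma quasi_greedy1_value : value b eta = 1.
Proof.
  assert (Hb : 1 < b) by lra.
  destruct eta_quasi_greedy as [[_ He] | [m [Hm1 [Hm2 He]]]].
  - rewrite (value_ext b eta (greedy1 b) He). exact value_greedy1.
  - assert (Hprefix : forall i, (i < m)%nat -> eta i = greedy1 b i).
    { intros i Hi. rewrite He, Nat.mod_small by lia.
      replace (i =? m)%nat with false by (symmetry; apply Nat.eqb_neq; lia). reflexivity. }
    assert (Hperiod : value b (shift eta (S m)) = value b eta).
    { apply value_ext. intro i. unfold shift. rewrite !He.
      replace (S m + i)%nat with (i + 1 * S m)%nat by lia. now rewrite Nat.Div0.mod_add. }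
    assert (Hzeros : value b (shift (greedy1 b) (S m)) = 0).
    { rewrite <- (value_zeros b Hb). apply value_ext. intro i. apply Hm2. lia. }
    pose proof (value_tail_diff b Hb eta (greedy1 b) m Hprefix) as Hdiff.
    pose proof (value_shift b Hb eta m) as Heta.
    pose proof (value_shift b Hb (greedy1 b) m) as Hg.
    rewrite Hperiod in Heta. rewrite Hzeros, Hm1 in Hg. rewrite value_greedy1 in Hdiff.
    rewrite He, Nat.mod_small, Nat.eqb_refl in Heta by lia. cbn [digR Nat.iter] in Heta, Hg.
    (* Comparing eta = (a_0 ... a_(m-1) 0)^oo with the greedy a_0 ... a_(m-1) 1 0^oo
       gives (value eta - 1) b^(m+1) = value eta - 1. *)
    assert (Hpow : 1 < b ^ S m) by (apply Rlt_pow_R1; lia || lra).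
    assert (Hz : (value b eta - 1) * (b ^ S m - 1) = 0).
    { rewrite <- tech_pow_Rmult. nra. }
    apply Rmult_integral in Hz. lra.
Qed.

Lemma quasi_greedy1_digit (k : nat) :
  value b (shift eta k) = / b * / (b - 1) -> eta k = true.
Proof.
  assert (Hb : 1 < b) by lra.
  intro Hk. destruct eta_quasi_greedy as [[_ He] | [m [Hm1 [Hm2 He]]]].
  - rewrite He. apply (greedy_digit_iff b b_range).
    rewrite (value_ext b _ (shift (greedy1 b) k)) in Hk by (intro; apply He).
    rewrite value_greedy1_tail in Hk. rewrite Hk.
    pose proof (one_le_inv_pred b b_range).
    assert (0 < / b) by (apply Rinv_0_lt_compat; lra). nra.
  - destruct (eta k) eqn:Ek; [reflexivity|exfalso].
    pose proof (value_shift b Hb eta k) as Hs. rewrite Hk, Ek in Hs. cbn [digR] in Hs.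
    assert (Htail : / (b - 1) <= value b (shift eta (S k))).
    { replace (b * (/ b * / (b - 1))) with (/ (b - 1)) in Hs by (field; lra). lra. }
    (* The tail after k would consist of ones, but eta vanishes at m + (k+1)(m+1). *)
    pose proof (value_max_ones b Hb _ Htail (m + S k * m)) as Hone. unfold shift in Hone.
    replace (S k + (m + S k * m))%nat with (m + S k * S m)%nat in Hone by lia.
    rewrite He, Nat.Div0.mod_add, Nat.mod_small, Nat.eqb_refl in Hone by lia. discriminate.
Qed.

End QuasiGreedy.

Definition unique_at (b : R) (c : nat -> bool) (n : nat) : Prop :=
  if c n then / (b - 1) - 1 < value b (shift c (S n)) else value b (shift c (S n)) < 1.

Lemma unique_at_negs (b : R) (c : nat -> bool) (n : nat) :
  1 < b -> unique_at b (negs c) n <-> unique_at b c n.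
Proof.
  intro Hb. unfold unique_at. change (shift (negs c) (S n)) with (negs (shift c (S n))).
  rewrite value_negs by exact Hb. unfold negs. destruct (c n); cbn [negb]; lra.
Qed.

Section Uniqueness.

Variable b : R.
Hypothesis b_range : 1 < b < 2.

Let b_gt1 : 1 < b. Proof. lra. Qed.

Lemma exists_expansion_with_digit (c : nat -> bool) (n : nat) (a : bool) (y : R) :
  0 <= y <= / (b - 1) -> b * value b (shift c n) = digR a + y ->
  exists d, value b d = value b c /\ d n = a.
Proof.
  intros Hy Hcn.
  set (t j := match j with O => a | S j => greedy_expansion b y j end).
  set (d i := if (i <? n)%nat then c i else t (i - n)%nat).
  assert (Hprefix : forall i, (i < n)%nat -> d i = c i).
  { intros i Hi. unfold d. now rewrite (proj2 (Nat.ltb_lt i n) Hi). }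
  assert (Htail : b * value b (shift d n) = digR a + y).
  { rewrite (value_ext b (shift d n) t).
    - rewrite value_cons by exact b_gt1. f_equal. exact (value_greedy_tail b b_range y 0 Hy).
    - intro i. unfold shift, d. rewrite (proj2 (Nat.ltb_ge (n + i) n)) by lia.
      f_equal. lia. }
  exists d. split.
  - pose proof (value_tail_diff b b_gt1 d c n Hprefix) as Hdiff.
    assert (0 < b ^ n) by (apply pow_lt; lra).
    assert (Hz : b ^ n * (value b d - value b c) = 0) by nra.
    apply Rmult_integral in Hz. lra.
  - unfold d. now rewrite Nat.ltb_irrefl, Nat.sub_diag.
Qed.

Lemma unique_at_of_Ubeta (c : nat -> bool) (n : nat) : Ubeta b c -> unique_at b c n.
Proof.
  intros [x [Hx Huniq]]. apply (bval_unique b) in Hx. subst x.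
  assert (Hswap : forall a y, a <> c n -> 0 <= y <= / (b - 1) ->
            b * value b (shift c n) = digR a + y -> False).
  { intros a y Ha Hy Hcn. destruct (exists_expansion_with_digit c n a y Hy Hcn) as [d [Hd Hdn]].
    apply Ha. rewrite <- Hdn. apply Huniq. rewrite <- Hd. apply bval_value, b_gt1. }
  pose proof (value_shift b b_gt1 c n) as Hcn. pose proof (value_bounds b b_gt1 (shift c (S n))).
  unfold unique_at. destruct (c n); cbn [digR] in Hcn.
  - apply Rnot_le_lt. intro Hle.
    apply (Hswap false (1 + value b (shift c (S n)))); [easy | lra | cbn; lra].
  - apply Rnot_le_lt. intro Hle.
    apply (Hswap true (value b (shift c (S n)) - 1)); [easy | | cbn; lra].
    pose proof (one_le_inv_pred b b_range). lra.
Qed.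

Lemma digit_eq_of_tail_value (c d : nat -> bool) (n : nat) : unique_at b c n ->
  value b (shift d n) = value b (shift c n) -> d n = c n.
Proof.
  intros Hc Hdc. unfold unique_at in Hc.
  pose proof (value_shift b b_gt1 c n). pose proof (value_shift b b_gt1 d n).
  pose proof (value_bounds b b_gt1 (shift c (S n))).
  pose proof (value_bounds b b_gt1 (shift d (S n))).
  destruct (d n), (c n); cbn [digR] in *; auto; nra.
Qed.

Lemma Ubeta_of_unique_at (c : nat -> bool) : (forall n, unique_at b c n) -> Ubeta b c.
Proof.
  intro Hc. exists (value b c). split; [apply bval_value, b_gt1|].
  intros d Hd. apply (bval_unique b) in Hd.
  assert (Hprefix : forall n i, (i < n)%nat -> d i = c i).
  { induction n as [|n IH]; intros i Hi; [lia|].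
    destruct (Nat.eq_dec i n) as [->|]; [|apply IH; lia].
    apply digit_eq_of_tail_value; [apply Hc|].
    pose proof (value_tail_diff b b_gt1 d c n IH). rewrite Hd in *. lra. }
  intro n. apply (Hprefix (S n)). lia.
Qed.

Lemma Ubeta_iff_unique_at (c : nat -> bool) : Ubeta b c <-> forall n, unique_at b c n.
Proof. split; [intros Hc n; exact (unique_at_of_Ubeta c n Hc) | apply Ubeta_of_unique_at]. Qed.

End Uniqueness.

Fixpoint prefix (c : nat -> bool) (len : nat) : list bool :=
  match len with O => nil | S l => c O :: prefix (shift c 1) l end.

Fixpoint lexlt (u v : list bool) : bool :=
  match u, v with
  | x :: u', y :: v' => (negb x && y) || (Bool.eqb x y && lexlt u' v')
  | _, _ => false
  end.

Definition lex_lt_upto (len : nat) (c d : nat -> bool) : Prop :=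
  exists j, (j < len)%nat /\ (forall i, (i < j)%nat -> c i = d i) /\ c j = false /\ d j = true.

Lemma lex_lt_upto_succ (len : nat) (c d : nat -> bool) : c O = d O ->
  lex_lt_upto (S len) c d <-> lex_lt_upto len (shift c 1) (shift d 1).
Proof.
  intro H0. split.
  - intros [[|j] [Hj [Hagree [Hc Hd]]]]; [congruence|].
    exists j. repeat split; try assumption; [lia|]. intros i Hi. apply (Hagree (S i)). lia.
  - intros [j [Hj [Hagree [Hc Hd]]]]. exists (S j). repeat split; try assumption; [lia|].
    intros [|i] Hi; [assumption|]. apply (Hagree i). lia.
Qed.

Lemma lexlt_prefix (len : nat) (c d : nat -> bool) :
  lexlt (prefix c len) (prefix d len) = true <-> lex_lt_upto len c d.
Proof.
  revert c d. induction len as [|len IH]; intros c d.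
  - split; [discriminate | intros [j [Hj _]]; lia].
  - cbn [prefix lexlt]. destruct (c O) eqn:Hc0, (d O) eqn:Hd0; cbn.
    + rewrite IH, lex_lt_upto_succ by congruence. reflexivity.
    + split; [discriminate|]. intros [[|j] [_ [Hagree [Hc _]]]]; [congruence|].
      specialize (Hagree O ltac:(lia)). congruence.
    + split; [intros _; exists O; repeat split; auto; [lia | intros; lia] | reflexivity].
    + rewrite IH, lex_lt_upto_succ by congruence. reflexivity.
Qed.

Lemma lex_trichotomy (len : nat) (c d : nat -> bool) :
  (forall i, (i < len)%nat -> c i = d i) \/ lex_lt_upto len c d \/ lex_lt_upto len d c.
Proof.
  revert c d. induction len as [|len IH]; intros c d; [left; intros; lia|].
  destruct (Bool.bool_dec (c O) (d O)) as [H0|H0].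
  - rewrite !lex_lt_upto_succ by congruence.
    destruct (IH (shift c 1) (shift d 1)) as [Hagree | Hlt]; [left | right; exact Hlt].
    intros [|i] Hi; [exact H0|]. apply (Hagree i). lia.
  - right. destruct (c O) eqn:Hc0; [right | left];
      exists O; repeat split; auto; try lia; try (intros; lia); destruct (d O); congruence.
Qed.

Definition window_ok (eta : nat -> bool) (k : nat) (c : nat -> bool) (n : nat) : Prop :=
  c n = false -> lexlt (prefix (shift c (S n)) (S k)) (prefix eta (S k)) = true.

Section FirstHit.

Variables (b : R) (eta : nat -> bool) (k : nat).
Hypothesis b_gt1 : 1 < b.
Hypothesis b_golden : 1 < b * (b - 1).
Hypothesis eta_value : value b eta = 1.
Hypothesis eta_k : eta k = true.
Hypothesis eta_tail_k : value b (shift eta k) = / b * / (b - 1).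
Hypothesis eta_tail_gap :
  forall j, (1 <= j < k)%nat -> ~ (/ b <= value b (shift eta j) <= / b * / (b - 1)).

Let hit_lt1 : / b * / (b - 1) < 1.
Proof. rewrite <- Rinv_mult, <- Rinv_1. apply Rinv_lt_contravar; lra. Qed.

Let mult_b_hit : b * (/ b * / (b - 1)) = / (b - 1).
Proof. field. lra. Qed.

Lemma first_hit_eta0 : eta O = true.
Proof.
  destruct (eta O) eqn:H0; [reflexivity|].
  pose proof (value_tail_le_of_false b b_gt1 eta O H0) as H.
  change (value b (shift eta O)) with (value b eta) in H. lra.
Qed.

Lemma lex_lt_first_hit (w : nat -> bool) : value b w < 1 ->
  (w k = true -> / (b - 1) - 1 < value b (shift w (S k))) -> lex_lt_upto (S k) w eta.
Proof.
  intros Hw Hwk.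
  rewrite <- eta_value in Hw.
  destruct (lex_trichotomy (S k) w eta) as [Hagree | [Hlt | [j [Hj [Hagree [Hej Hwj]]]]]];
    [exfalso | exact Hlt | exfalso].
  - assert (Hwk1 : w k = true) by (rewrite Hagree; auto).
    pose proof (value_tail_lt b b_gt1 w eta k (fun i Hi => Hagree i ltac:(lia)) Hw) as Htail.
    pose proof (value_shift b b_gt1 w k) as Hs. rewrite Hwk1 in Hs. cbn [digR] in Hs.
    specialize (Hwk Hwk1). rewrite eta_tail_k in Htail. nra.
  - assert (j <> O) by (intros ->; rewrite first_hit_eta0 in Hej; discriminate).
    assert (j <> k) by (intros ->; congruence).
    apply (eta_tail_gap j); [lia|]. split.
    + apply Rlt_le, (Rle_lt_trans _ (value b (shift w j))).
      * exact (value_tail_ge_of_true b b_gt1 w j Hwj).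
      * apply (value_tail_lt b b_gt1 w eta j (fun i Hi => eq_sym (Hagree i Hi)) Hw).
    + exact (value_tail_le_of_false b b_gt1 eta j Hej).
Qed.

Lemma ones_after_lex_lt_first_hit (w : nat -> bool) : 1 <= value b w ->
  lex_lt_upto (S k) w eta -> w k = false /\ forall i, w (S k + i)%nat = true.
Proof.
  intros Hw [j [Hj [Hagree [Hwj Hej]]]].
  rewrite <- eta_value in Hw.
  pose proof (value_tail_le b b_gt1 eta w j (fun i Hi => eq_sym (Hagree i Hi)) Hw) as Htail.
  pose proof (value_tail_le_of_false b b_gt1 w j Hwj) as Hwtail.
  destruct (Nat.eq_dec j k) as [->|Hjk].
  - split; [exact Hwj|]. intro i. revert i.
    change (forall i, shift w (S k) i = true). apply (value_max_ones b b_gt1).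
    pose proof (value_shift b b_gt1 w k) as Hs. rewrite Hwj in Hs. cbn [digR] in Hs.
    rewrite eta_tail_k in Htail. nra.
  - exfalso. destruct j as [|j].
    { change (value b (shift ?c O)) with (value b c) in Htail, Hwtail. lra. }
    apply (eta_tail_gap (S j)); [lia|]. split; [|lra].
    exact (value_tail_ge_of_true b b_gt1 eta (S j) Hej).
Qed.

Lemma window_ok_of_unique_at (c : nat -> bool) (n : nat) :
  (forall m, unique_at b c m) -> window_ok eta k c n.
Proof.
  intros Hc Hcn. apply lexlt_prefix, lex_lt_first_hit.
  - specialize (Hc n). unfold unique_at in Hc. rewrite Hcn in Hc. exact Hc.
  - intro Hck. specialize (Hc (S n + k)%nat). unfold unique_at in Hc.
    change (shift c (S n) k) with (c (S n + k)%nat) in Hck. rewrite Hck in Hc.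
    rewrite value_shift_shift. rewrite Nat.add_succ_r. exact Hc.
Qed.

Lemma value_lt1_of_window_ok (c : nat -> bool) (n : nat) :
  (forall m, window_ok eta k c m) -> c n = false -> value b (shift c (S n)) < 1.
Proof.
  intros Hw Hcn. apply Rnot_le_lt. intro Hge.
  pose proof (proj1 (lexlt_prefix _ _ _) (Hw n Hcn)) as Hlex.
  destruct (ones_after_lex_lt_first_hit _ Hge Hlex) as [Hzero Hones].
  destruct (proj1 (lexlt_prefix _ _ _) (Hw (S n + k)%nat Hzero)) as [j [_ [_ [Hj _]]]].
  specialize (Hones j). unfold shift in Hj, Hones.
  replace (S (S n + k) + j)%nat with (S n + (S k + j))%nat in Hj by lia. congruence.
Qed.

Lemma unique_at_iff_window_ok (c : nat -> bool) :
  (forall n, unique_at b c n) <-> (forall n, window_ok eta k c n /\ window_ok eta k (negs c) n).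
Proof.
  split.
  - intros Hc n. split; apply window_ok_of_unique_at; [exact Hc|].
    intro m. apply (unique_at_negs b c m b_gt1), Hc.
  - intros Hw n. destruct (c n) eqn:Hcn.
    + apply (unique_at_negs b c n b_gt1). unfold unique_at. unfold negs at 1. rewrite Hcn.
      apply value_lt1_of_window_ok; [intro m; apply Hw | unfold negs; rewrite Hcn; reflexivity].
    + unfold unique_at. rewrite Hcn. apply value_lt1_of_window_ok; [intro m; apply Hw | exact Hcn].
Qed.

End FirstHit.

Fixpoint all_words (n : nat) : list (list bool) :=
  match n with
  | O => nil :: nil
  | S n => map (cons false) (all_words n) ++ map (cons true) (all_words n)
  end.

Lemma in_all_words (u : list bool) : In u (all_words (length u)).
Proof.
  induction u as [|x u IH]; cbn; [now left|].
  apply in_or_app. destruct x; [right|left]; now apply in_map.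
Qed.

Lemma all_words_length (n : nat) (u : list bool) : In u (all_words n) -> length u = n.
Proof.
  revert u. induction n as [|n IH]; intros u Hu; cbn in Hu.
  - now destruct Hu as [<-|[]].
  - apply in_app_or in Hu.
    destruct Hu as [Hu|Hu]; apply in_map_iff in Hu; destruct Hu as [v [<- Hv]]; cbn; auto.
Qed.

Lemma prefix_length (c : nat -> bool) (len : nat) : length (prefix c len) = len.
Proof. revert c. induction len; intro c; cbn; auto. Qed.

Lemma occurs_at_cons (x : bool) (w : list bool) (c : nat -> bool) (p : nat) :
  occurs_at (x :: w) c p <-> c p = x /\ occurs_at w c (S p).
Proof.
  unfold occurs_at. cbn [length nth]. split.
  - intro H. split.
    + rewrite <- (Nat.add_0_r p). apply (H O). lia.
    + intros i Hi. replace (S p + i)%nat with (p + S i)%nat by lia. apply (H (S i)). lia.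
  - intros [H0 H] [|i] Hi; [now rewrite Nat.add_0_r|].
    replace (p + S i)%nat with (S p + i)%nat by lia. apply H. lia.
Qed.

Lemma occurs_at_iff_prefix (w : list bool) (c : nat -> bool) (p : nat) :
  occurs_at w c p <-> prefix (shift c p) (length w) = w.
Proof.
  change (occurs_at w c p) with (occurs_at w (shift c p) 0).
  generalize (shift c p). clear c p. induction w as [|x w IH]; intro c.
  - split; [reflexivity | intros _ i Hi; cbn in Hi; lia].
  - rewrite occurs_at_cons. change (occurs_at w c 1) with (occurs_at w (shift c 1) 0).
    rewrite IH. cbn. split; [intros [-> ->]; reflexivity | intro H; injection H; auto].
Qed.

Lemma occurs_at_map_negb (w : list bool) (c : nat -> bool) (p : nat) :
  occurs_at (map negb w) c p <-> occurs_at w (negs c) p.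
Proof.
  unfold occurs_at, negs. rewrite length_map.
  assert (Hnth : forall i, (i < length w)%nat -> nth i (map negb w) false = negb (nth i w false)).
  { intros i Hi. rewrite (nth_indep _ false (negb false)) by (rewrite length_map; exact Hi).
    apply map_nth. }
  split; intros H i Hi; specialize (H i Hi); rewrite Hnth in * by exact Hi.
  - now rewrite H, Bool.negb_involutive.
  - now rewrite <- H, Bool.negb_involutive.
Qed.

Definition avoids (F : list (list bool)) (c : nat -> bool) : Prop :=
  forall w, In w F -> forall p, ~ occurs_at w c p.

Lemma avoids_app (F G : list (list bool)) (c : nat -> bool) :
  avoids (F ++ G) c <-> avoids F c /\ avoids G c.
Proof.
  unfold avoids. split.
  - intro H. split; intros w Hw; apply H, in_or_app; auto.
  - intros [HF HG] w Hw. apply in_app_or in Hw. destruct Hw; auto.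
Qed.

Lemma avoids_map_negb (F : list (list bool)) (c : nat -> bool) :
  avoids (map (map negb) F) c <-> avoids F (negs c).
Proof.
  unfold avoids. split.
  - intros H w Hw p Hocc. apply (H (map negb w) (in_map _ _ _ Hw) p).
    now apply occurs_at_map_negb.
  - intros H w' Hw' p Hocc. apply in_map_iff in Hw'. destruct Hw' as [w [<- Hw]].
    apply (H w Hw p). now apply occurs_at_map_negb.
Qed.

Definition forbidden_after_zero (eta : nat -> bool) (k : nat) : list (list bool) :=
  map (cons false)
    (filter (fun u => negb (lexlt u (prefix eta (S k)))) (all_words (S k))).

Definition forbidden_words (eta : nat -> bool) (k : nat) : list (list bool) :=
  forbidden_after_zero eta k ++ map (map negb) (forbidden_after_zero eta k).

Lemma window_ok_iff_avoids (eta : nat -> bool) (k : nat) (c : nat -> bool) :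
  (forall n, window_ok eta k c n) <-> avoids (forbidden_after_zero eta k) c.
Proof.
  split.
  - intros Hw w Hin p Hocc. apply in_map_iff in Hin. destruct Hin as [u [<- Hu]].
    apply filter_In in Hu. destruct Hu as [Hu Hlex]. apply all_words_length in Hu.
    apply occurs_at_cons in Hocc. destruct Hocc as [Hcp Hocc].
    apply occurs_at_iff_prefix in Hocc. rewrite Hu in Hocc.
    rewrite <- Hocc, (Hw p Hcp) in Hlex. discriminate.
  - intros Havoid n Hcn. destruct (lexlt _ _) eqn:Hlex; [reflexivity | exfalso].
    refine (Havoid (false :: prefix (shift c (S n)) (S k)) _ n _).
    + apply in_map, filter_In. rewrite Hlex. split; [|reflexivity].
      rewrite <- (prefix_length (shift c (S n)) (S k)) at 2. apply in_all_words.
    + apply occurs_at_cons. split; [exact Hcn|].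
      apply occurs_at_iff_prefix. now rewrite prefix_length.
Qed.

Lemma avoids_forbidden_words (eta : nat -> bool) (k : nat) (c : nat -> bool) :
  avoids (forbidden_words eta k) c <->
  (forall n, window_ok eta k c n /\ window_ok eta k (negs c) n).
Proof.
  unfold forbidden_words. rewrite avoids_app, avoids_map_negb, <- !window_ok_iff_avoids.
  split; [intros [H1 H2] n; auto | intro H; split; intro n; apply H].
Qed.

Lemma golden_ratio_lt (b : R) : (1 + sqrt 5) / 2 < b -> 1 < b /\ 1 < b * (b - 1).
Proof.
  intro Hb. pose proof (sqrt_sqrt 5 ltac:(lra)). pose proof (sqrt_pos 5).
  assert (1 < sqrt 5) by nra. split; nra.
Qed.

Theorem lemma3p8 (beta : R) (eta : nat -> bool) :
  (1 + sqrt 5) / 2 < beta < 2 ->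
  quasi_greedy1 beta eta ->
  (exists k : nat, (1 <= k)%nat /\
     Qorb beta eta k (/ beta * / (beta - 1)) /\
     (forall i q, (1 <= i < k)%nat -> Qorb beta eta i q ->
        ~ (/ beta <= q <= / beta * / (beta - 1)))) ->
  is_SFT (Ubeta beta).
Proof.
  intros Hbeta Hq [k [_ [Hqk Hgap]]].
  destruct (golden_ratio_lt beta (proj1 Hbeta)) as [Hb1 Hgolden].
  assert (Hb : 1 < beta < 2) by lra.
  apply (bval_unique beta) in Hqk. symmetry in Hqk.
  change (fun j => eta (k + j)%nat) with (shift eta k) in Hqk.
  assert (Hgap' : forall j, (1 <= j < k)%nat ->
            ~ (/ beta <= value beta (shift eta j) <= / beta * / (beta - 1)))
    by (intros j Hj; exact (Hgap j _ Hj (bval_value beta Hb1 _))).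
  exists (forbidden_words eta k). intro c.
  rewrite Ubeta_iff_unique_at by exact Hb.
  rewrite (unique_at_iff_window_ok beta eta k Hb1 Hgolden (quasi_greedy1_value beta eta Hb Hq)
             (quasi_greedy1_digit beta eta Hb Hq k Hqk) Hqk Hgap').
  symmetry. apply avoids_forbidden_words.
Qed.
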